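(* Let $\phi\colon P(\mathbb{R})\to P(\mathbb{R})$ be a surjective isometry with respect to the Kuiper distance. Then there exists a bijection $f\colon\mathbb{R}\to\mathbb{R}$ such that $$\phi(\mu)(\{f(x)\})=\mu(\{x\})\qquad(\mu\in P(\mathbb{R}),\ x\in\mathbb{R}).$$
   Context: $P(\mathbb{R})$ is the set of Borel probability measures on $\mathbb{R}$, with the Kuiper distance $d_{Ku}(\mu,\nu)=\sup\{|\mu(I)-\nu(I)| : I\text{ a non-degenerate interval of }\mathbb{R}\}$. *)

From HB Require Import structures.
From mathcomp Require Import all_boot all_order all_algebra.
From mathcomp Require Import all_classical all_reals all_analysis.
Set Implicit Arguments. Unset Strict Implicit. Unset Printing Implicit Defensive.
Import Order.TTheory GRing.Theory Num.Theory.
Local Open Scope classical_set_scope.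
Local Open Scope ring_scope.

(* P(R): Borel probability measures on R (R carries its canonical Borel
   sigma-algebra in mathcomp-analysis). *)
Definition PR (R : realType) := probability R R.

Definition nondeg_itv (R : realType) (I : interval R) : Prop :=
  exists x y : R, x < y /\ x \in I /\ y \in I.

(* Kuiper distance: sup over non-degenerate intervals I of |mu(I) - nu(I)|.
   Probability measures take finite values, so [fine] is harmless. *)
Definition kuiper (R : realType) (mu nu : PR R) : R :=
  sup [set `|fine (mu [set` I]) - fine (nu [set` I])| |
       I in [set I : interval R | nondeg_itv I]].

From HB Require Import structures.
From mathcomp Require Import all_boot all_order all_algebra.
From mathcomp Require Import all_classical all_reals all_analysis.
From mathcomp Require Import lra.
Set Implicit Arguments. Unset Strict Implicit. Unset Printing Implicit Defensive.
Import Order.TTheory GRing.Theory Num.Theory.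
Local Open Scope classical_set_scope.
Local Open Scope ring_scope.

(* The Kuiper distance from a Dirac mass \d_c to any nu is 1 - nu{c}.  Hence
   two measures at distance < 1 from \d_c both charge c and are at distance
   < 1 from each other: the open unit ball around \d_c is "transitive".
   Conversely, if mu(]-oo, t[) > 0 and mu(]t', +oo[) > 0 with t < t', the
   pushforwards of mu by min(., t) and by max(., t') are both at distance < 1
   from mu but at distance 1 from each other (look at ]-oo, t]); so a measure
   with a transitive unit ball never charges two separated tails, and is a
   Dirac mass.  A surjective isometry preserves transitivity of unit balls,
   hence maps \d_x to some \d_(f x), and then
   nu{x} = 1 - d(\d_x, nu) = 1 - d(\d_(f x), phi nu) = (phi nu){f x}. *)

Section Probabilities.
Variable R : realType.
Implicit Types (mu : PR R) (A B L : set R).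

Definition pr mu A : R := fine (mu A).

Lemma prE mu A : measurable A -> mu A = (pr mu A)%:E.
Proof. by move=> mA; rewrite /pr fineK // fin_num_measure. Qed.

Lemma pr_ge0 mu A : measurable A -> 0 <= pr mu A.
Proof. by move=> mA; rewrite -lee_fin -prE. Qed.

Lemma pr_le1 mu A : measurable A -> pr mu A <= 1.
Proof. by move=> mA; rewrite -lee_fin -prE // probability_le1. Qed.

Lemma pr_setT mu : pr mu setT = 1.
Proof. by rewrite /pr probability_setT. Qed.

Lemma pr_setC mu A : measurable A -> pr mu (~` A) = 1 - pr mu A.
Proof.
move=> mA; apply/EFin_inj; rewrite -prE; last exact: measurableC.
by rewrite probability_setC // prE.
Qed.

Lemma le_pr mu A B : measurable A -> measurable B -> A `<=` B -> pr mu A <= pr mu B.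
Proof. by move=> mA mB AB; rewrite -lee_fin -!prE //; apply: le_measure; rewrite ?inE. Qed.

Lemma le_prU mu A B : measurable A -> measurable B ->
  pr mu (A `|` B) <= pr mu A + pr mu B.
Proof.
move=> mA mB; rewrite -lee_fin EFinD -!prE //; last exact: measurableU.
exact: measureU2.
Qed.

Lemma subset_pr_eq0 mu A B : measurable A -> measurable B -> A `<=` B ->
  pr mu B = 0 -> pr mu A = 0.
Proof. by move=> mA mB AB B0; apply/le_anti; rewrite pr_ge0 // -B0 le_pr. Qed.

Lemma pr_null_bigcup mu A (F : nat -> set R) : measurable A ->
  (forall n, measurable (F n)) -> (forall n, pr mu (F n) = 0) ->
  A `<=` \bigcup_n F n -> pr mu A = 0.
Proof.
move=> mA mF F0 AF.
have : mu.-negligible (\bigcup_n F n).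
  apply: negligible_bigcup => n; apply/negligibleP => //.
  by have := prE mu (mF n); rewrite F0; apply.
by move=> /(negligibleS AF) /negligibleP A0; rewrite /pr A0.
Qed.

Lemma exists_pr_gt0 mu (F : nat -> set R) :
  (forall n, measurable (F n)) -> \bigcup_n F n = setT -> exists n, 0 < pr mu (F n).
Proof.
move=> mF FT; apply/not_existsP => Fle0.
have : pr mu setT = 0.
  apply: (pr_null_bigcup _ mF); rewrite ?FT // => n.
  by apply/le_anti; rewrite pr_ge0 // andbT leNgt; apply/negP.
by rewrite pr_setT => /eqP; rewrite oner_eq0.
Qed.

Lemma pr_itvNy_eq0 mu c :
  (forall e, 0 < e -> pr mu `]-oo, c - e[%classic = 0) -> pr mu `]-oo, c[%classic = 0.
Proof.
move=> h; apply: (pr_null_bigcup (F := fun n => `]-oo, c - n.+1%:R^-1[%classic)) => //.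
- by move=> n; apply: h; rewrite invr_gt0.
- move=> x; rewrite /= in_itv /= => /ltr_add_invr[n xn]; exists n => //=.
  by rewrite in_itv /= ltrBrDr.
Qed.

Lemma pr_itvoy_eq0 mu c :
  (forall e, 0 < e -> pr mu `]c + e, +oo[%classic = 0) -> pr mu `]c, +oo[%classic = 0.
Proof.
move=> h; apply: (pr_null_bigcup (F := fun n => `]c + n.+1%:R^-1, +oo[%classic)) => //.
- by move=> n; apply: h; rewrite invr_gt0.
- move=> x; rewrite /= in_itv /= andbT => /ltr_add_invr[n xn]; exists n => //=.
  by rewrite in_itv /= andbT.
Qed.

Lemma pr_set1_eq1 mu c : pr mu `]-oo, c[%classic = 0 -> pr mu `]c, +oo[%classic = 0 ->
  pr mu [set c] = 1.
Proof.
move=> l0 r0; have mc := measurable_set1 c.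
have : pr mu (~` [set c]) <= pr mu (`]-oo, c[ `|` `]c, +oo[)%classic.
  apply: le_pr; [exact: measurableC | exact: measurableU | ].
  move=> x /= xc; have /orP[lt_xc|lt_cx] : (x < c) || (c < x) by rewrite -neq_lt; apply/eqP.
  - by left; rewrite /= in_itv.
  - by right; rewrite /= in_itv /= lt_cx.
have := le_prU mu (measurable_itv `]-oo, c[) (measurable_itv `]c, +oo[).
rewrite pr_setC // l0 r0; have := pr_le1 mu mc; lra.
Qed.

Lemma pr_set1_ge mu c b :
  (forall n : nat, b <= pr mu `[c, c + n.+1%:R^-1]%classic) -> b <= pr mu [set c].
Proof.
move=> ge_b; pose F n := `[c, c + n.+1%:R^-1]%classic.
have mF n : measurable (F n) by exact: measurable_itv.
have Fc : \bigcap_n F n = [set c].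
  apply/seteqP; split=> [x Fx|x -> n _]; last first.
    by rewrite /F /= in_itv /= lexx lerDl /= invr_ge0.
  have := Fx 0%N I; rewrite /F /= in_itv /= => /andP[cx _].
  apply/le_anti; rewrite cx andbT leNgt; apply/negP => /ltr_add_invr[n xn].
  by have := Fx n I; rewrite /F /= in_itv /= cx /= leNgt xn.
have : (mu \o F) n @[n --> \oo] --> mu [set c].
  rewrite -Fc; apply: nonincreasing_cvg_mu => //.
  - by rewrite (le_lt_trans (probability_le1 mu (mF 0%N))) ?ltry.
  - exact: bigcapT_measurable.
  move=> n m nm; apply/subsetPset => x; rewrite /F /= !in_itv /= => /andP[-> xb].
  by rewrite (le_trans xb) // lerD2l lef_pV2 ?posrE // ler_nat.
move=> cvgF; rewrite -lee_fin -prE ?measurable_set1 // -(cvg_lim _ cvgF) //.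
apply: lime_ge; first exact: cvgP cvgF.
by apply: nearW => n /=; rewrite (prE mu (mF n)) lee_fin; exact: ge_b.
Qed.

End Probabilities.

Section Kuiper.
Variable R : realType.
Implicit Types mu nu rho : PR R.

Lemma kuiper_le mu nu b :
  (forall I, nondeg_itv I -> `|pr mu [set` I] - pr nu [set` I]| <= b) ->
  kuiper mu nu <= b.
Proof.
move=> le_b; apply: ge_sup => [|_ [I I_nd <-]]; last exact: le_b.
by exists `|pr mu setT - pr nu setT|, `]-oo, +oo[; rewrite ?set_itvE //; exists 0, 1.
Qed.

Lemma kuiper_ge mu nu I : nondeg_itv I ->
  `|pr mu [set` I] - pr nu [set` I]| <= kuiper mu nu.
Proof.
move=> I_nd; apply: sup_upper_bound; last by exists I.
split; first by exists `|pr mu [set` I] - pr nu [set` I]|, I.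
exists 1 => _ [J _ <-]; rewrite -/(pr mu _) -/(pr nu _); have mJ := measurable_itv J.
have := pr_ge0 mu mJ; have := pr_le1 mu mJ; have := pr_ge0 nu mJ; have := pr_le1 nu mJ.
by rewrite ler_norml => *; apply/andP; split; lra.
Qed.

Lemma kuiper_le_set1 mu nu c :
  kuiper mu nu <= 1 - Num.min (pr mu [set c]) (pr nu [set c]).
Proof.
set m := Num.min _ _; have /andP[m_mu m_nu] : (m <= pr mu [set c]) && (m <= pr nu [set c]).
  by rewrite -le_min.
apply: kuiper_le => I _; have mI := measurable_itv I; have mc := measurable_set1 c.
have := pr_ge0 mu mI; have := pr_le1 mu mI; have := pr_ge0 nu mI; have := pr_le1 nu mI.
rewrite ler_norml; have [cI|cI] := boolP (c \in I).
- have sub : [set c] `<=` [set` I] by move=> x ->.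
  by have := le_pr mu mc mI sub; have := le_pr nu mc mI sub => *; apply/andP; split; lra.
- have sub : [set` I] `<=` ~` [set c] by move=> x /= Ix xc; rewrite -xc Ix in cI.
  have := le_pr mu mI (measurableC mc) sub; have := le_pr nu mI (measurableC mc) sub.
  by rewrite !pr_setC // => *; apply/andP; split; lra.
Qed.

Lemma kuiper_atom1 mu nu c : pr mu [set c] = 1 -> kuiper mu nu = 1 - pr nu [set c].
Proof.
move=> mu_c; apply/le_anti/andP; split.
  by have := kuiper_le_set1 mu nu c; rewrite mu_c min_r // pr_le1 // measurable_set1.
rewrite lerBlDl -lerBlDr; apply: pr_set1_ge => n.
pose I := `[c, c + n.+1%:R^-1]; have mI := measurable_itv I.
have I_nd : nondeg_itv I.
  exists c, (c + n.+1%:R^-1); rewrite !in_itv /= lexx ltrDl invr_gt0 /=.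
  by rewrite lerDl invr_ge0 ltr0Sn ler0n lexx.
have mu_I : pr mu [set` I] = 1.
  apply/le_anti; rewrite pr_le1 //= -mu_c le_pr ?measurable_set1 // => x ->.
  by rewrite /= in_itv /= lexx lerDl /= invr_ge0.
by have := kuiper_ge mu nu I_nd; rewrite mu_I => /(le_trans (ler_norm _)); lra.
Qed.

Definition ball_transitive mu := forall nu rho,
  kuiper mu nu < 1 -> kuiper mu rho < 1 -> kuiper nu rho < 1.

Lemma atom1_ball_transitive mu c : pr mu [set c] = 1 -> ball_transitive mu.
Proof.
move=> mu_c nu rho; rewrite !(kuiper_atom1 _ mu_c) => nu_c rho_c.
apply: le_lt_trans (kuiper_le_set1 nu rho c) _.
suff : 0 < Num.min (pr nu [set c]) (pr rho [set c]) by lra.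
by rewrite lt_min; apply/andP; split; lra.
Qed.

End Kuiper.

Definition min_with (R : realType) (t x : R) : R := Order.min x t.
Definition max_with (R : realType) (t x : R) : R := Order.max x t.

Lemma measurable_min_with (R : realType) (t : R) : measurable_fun setT (min_with t).
Proof. exact: measurable_realfun.measurable_minr. Qed.

Lemma measurable_max_with (R : realType) (t : R) : measurable_fun setT (max_with t).
Proof. exact: measurable_realfun.measurable_maxr. Qed.

HB.instance Definition _ (R : realType) (t : R) :=
  isMeasurableFun.Build _ _ R R (min_with t) (measurable_min_with t).
HB.instance Definition _ (R : realType) (t : R) :=
  isMeasurableFun.Build _ _ R R (max_with t) (measurable_max_with t).

Section Tails.
Variable R : realType.
Implicit Types (mu : PR R) (A B L : set R).

Lemma pr_distribution mu (g : {mfun R >-> R}) A :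
  pr (distribution mu g) A = pr mu (g @^-1` A).
Proof. by []. Qed.

Lemma normr_prB_le mu A B L : measurable A -> measurable B -> measurable L ->
  A `&` L = B `&` L -> `|pr mu A - pr mu B| <= 1 - pr mu L.
Proof.
move=> mA mB mL ABL.
have le_prB X Y : measurable X -> measurable Y -> X `&` L `<=` Y ->
    pr mu X <= pr mu Y + (1 - pr mu L).
  move=> mX mY XLY; rewrite -pr_setC //.
  apply: le_trans (le_prU mu mY (measurableC mL)).
  apply: le_pr => //; first exact: measurableU (measurableC mL).
  by move=> x Xx; have [Lx|] := pselect (L x); [left; apply: XLY | right].
have AL_B : A `&` L `<=` B by rewrite ABL => x [].
have BL_A : B `&` L `<=` A by rewrite -ABL => x [].
have := le_prB _ _ mA mB AL_B; have := le_prB _ _ mB mA BL_A.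
by rewrite ler_norml => *; apply/andP; split; lra.
Qed.

Lemma kuiper_distribution_le mu (g : {mfun R >-> R}) L : measurable L ->
  (forall x, L x -> g x = x) -> kuiper mu (distribution mu g) <= 1 - pr mu L.
Proof.
move=> mL gL; apply: kuiper_le => I _; rewrite pr_distribution.
have mI := measurable_itv I.
apply: normr_prB_le => //; first exact: measurable_funPTI.
by apply/seteqP; split=> x [Ix Lx]; split=> //=; rewrite ?gL // -(gL x Lx).
Qed.

Lemma ball_transitive_tails mu t t' : ball_transitive mu -> t < t' ->
  pr mu `]-oo, t[%classic = 0 \/ pr mu `]t', +oo[%classic = 0.
Proof.
move=> mu_bt tt'.
pose nu := distribution mu (min_with t); pose rho := distribution mu (max_with t').
have far : 1 <= kuiper nu rho.
  have nd : nondeg_itv `]-oo, t] by exists (t - 1), t; rewrite !in_itv /= lexx; lra.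
  have nu_t : min_with t @^-1` `]-oo, t]%classic = setT.
    by apply/seteqP; split=> x //= _; rewrite in_itv /= ge_min lexx orbT.
  have rho_t : max_with t' @^-1` `]-oo, t]%classic = set0.
    by apply/seteqP; split=> x //=; rewrite in_itv /= ge_max (leNgt t') tt' andbF.
  have := kuiper_ge nu rho nd; rewrite !pr_distribution nu_t rho_t pr_setT.
  by rewrite /pr measure0 subr0 normr1.
have [l0|l_neq0] := eqVneq (pr mu `]-oo, t[%classic) 0; first by left.
have [r0|r_neq0] := eqVneq (pr mu `]t', +oo[%classic) 0; first by right.
have mu_nu : kuiper mu nu < 1.
  apply: le_lt_trans (kuiper_distribution_le _ (measurable_itv `]-oo, t[) _) _.
    by move=> x; rewrite /= in_itv /= => /ltW xt; rewrite /min_with min_l.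
  by rewrite gtrBl lt0r l_neq0 pr_ge0.
have mu_rho : kuiper mu rho < 1.
  apply: le_lt_trans (kuiper_distribution_le _ (measurable_itv `]t', +oo[) _) _.
    by move=> x; rewrite /= in_itv /= andbT => /ltW xt; rewrite /max_with max_l.
  by rewrite gtrBl lt0r r_neq0 pr_ge0.
by have := mu_bt _ _ mu_nu mu_rho; rewrite ltNge far.
Qed.

Lemma tails_atom1 mu :
  (forall t t', t < t' -> pr mu `]-oo, t[%classic = 0 \/ pr mu `]t', +oo[%classic = 0) ->
  exists c, pr mu [set c] = 1.
Proof.
move=> tails.
have [n] := exists_pr_gt0 mu (fun n => measurable_itv _) (bigcup_itvT false true).
set a := - n%:R; set b := n%:R => /= ab_gt0.
have pr_gt0 X : measurable X -> `]a, b[%classic `<=` X -> 0 < pr mu X.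
  by move=> mX abX; apply: lt_le_trans ab_gt0 (le_pr _ _ mX abX).
pose L := [set t | pr mu `]-oo, t[%classic = 0].
have La : L (a - 1).
  have [//|a0] := tails (a - 1) a ltac:(lra).
  have : 0 < pr mu `]a, +oo[%classic.
    by apply: pr_gt0 => // x; rewrite /= !in_itv /= => /andP[->].
  by rewrite a0 ltxx.
have Lb : ubound L b.
  move=> t Lt; rewrite leNgt; apply/negP => bt.
  have : 0 < pr mu `]-oo, t[%classic.
    by apply: pr_gt0 => // x; rewrite /= !in_itv /= => /andP[_ /lt_trans]; apply.
  by rewrite Lt ltxx.
have supL : has_sup L by split; [exists (a - 1) | exists b].
exists (sup L); apply: pr_set1_eq1.
- apply: pr_itvNy_eq0 => e e0; have [t Lt lt_t] := sup_adherent e0 supL.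
  apply: subset_pr_eq0 Lt => // x; rewrite /= !in_itv /= => /lt_trans; apply.
  by rewrite lt_t.
- apply: pr_itvoy_eq0 => e e0.
  have [Le|//] := tails (sup L + e / 2) (sup L + e) ltac:(lra).
  by have := sup_upper_bound supL Le; lra.
Qed.

Lemma ball_transitiveP mu : ball_transitive mu <-> exists c, pr mu [set c] = 1.
Proof.
split=> [mu_bt|[c /atom1_ball_transitive //]].
by apply: tails_atom1 => t t'; apply: ball_transitive_tails.
Qed.

End Tails.

Lemma pr_dirac_set1 (R : realType) (x y : R) :
  (pr (\d_x : PR R) [set y] == 1) = (x == y).
Proof.
have -> : pr (\d_x : PR R) [set y] = (x \in [set y])%:R.
  by have := congr1 fine (@diracE _ R R x [set y]); apply.
rewrite pnatr_eq1 eqb1.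
by apply/idP/eqP => [/set_mem //|->]; exact: mem_set.
Qed.

Section Isometry.
Variables (R : realType) (phi : PR R -> PR R).
Hypothesis phi_surj : forall nu : PR R, exists mu : PR R, phi mu = nu.
Hypothesis phi_iso : forall mu nu : PR R, kuiper (phi mu) (phi nu) = kuiper mu nu.

Lemma isometry_ball_transitive mu : ball_transitive (phi mu) <-> ball_transitive mu.
Proof.
split=> [phi_bt nu rho mu_nu mu_rho|mu_bt nu' rho'].
  by rewrite -phi_iso; apply: phi_bt; rewrite phi_iso.
have [nu <-] := phi_surj nu'; have [rho <-] := phi_surj rho'.
by rewrite !phi_iso; apply: mu_bt.
Qed.

Lemma isometry_pr_set1 mu x c :
  pr (phi \d_x) [set c] = 1 -> pr (phi mu) [set c] = pr mu [set x].
Proof.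
have dirac_x : pr (\d_x : PR R) [set x] = 1 by apply/eqP; rewrite pr_dirac_set1 eqxx.
move=> phi_x; have := kuiper_atom1 (phi mu) phi_x.
by rewrite phi_iso (kuiper_atom1 mu dirac_x); lra.
Qed.

End Isometry.

Theorem lemma3p2 (R : realType) (phi : PR R -> PR R)
  (phi_surj : forall nu : PR R, exists mu : PR R, phi mu = nu)
  (phi_iso : forall mu nu : PR R, kuiper (phi mu) (phi nu) = kuiper mu nu) :
  exists f : R -> R, bijective f /\
    forall (mu : PR R) (x : R), phi mu [set f x] = mu [set x].
Proof.
have bt_dirac (y : R) : ball_transitive (\d_y : PR R).
  by apply/ball_transitiveP; exists y; apply/eqP; rewrite pr_dirac_set1 eqxx.
have /choice[f phi_dirac] : forall x, exists c, pr (phi \d_x) [set c] = 1.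
  move=> x; apply/ball_transitiveP/(isometry_ball_transitive phi_surj phi_iso).
  exact: bt_dirac.
have phiE mu x : pr (phi mu) [set f x] = pr mu [set x].
  exact: (isometry_pr_set1 phi_iso mu (phi_dirac x)).
exists f; split; last by move=> mu x; rewrite !prE ?measurable_set1 // phiE.
rewrite -setTT_bijective; split=> [//|x y _ _ fxy|y _].
  by apply/eqP; rewrite -pr_dirac_set1 -phiE -fxy phi_dirac.
have [mu phi_mu] := phi_surj \d_y.
have [c mu_c] : exists c, pr mu [set c] = 1.
  apply/ball_transitiveP/(isometry_ball_transitive phi_surj phi_iso).
  by rewrite phi_mu; exact: bt_dirac.
by exists c => //; apply/eqP; rewrite eq_sym -pr_dirac_set1 -phi_mu phiE mu_c.
Qed.
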